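(* For any digraph $D$ with no isolated vertex and any positive integers $k<k'$, $$\gamma_{trk'}(D)\le\gamma_{trk}(D)+(k'-k)\left\lfloor\frac{\gamma_{trk}(D)}{k}\right\rfloor,$$ and this bound is sharp.
   Context: All digraphs are finite, with no loops or multiple arcs (pairs of opposite arcs are allowed). $N^-(v)$ denotes the set of in-neighbors of $v$. A vertex is isolated if it has no in-neighbor and no out-neighbor. For a positive integer $k$, a $k$-rainbow dominating function ($k$RDF) on $D$ is a function $f:V(D)\to\mathcal P(\{1,\dots,k\})$ such that every $v$ with $f(v)=\emptyset$ satisfies $\bigcup_{u\in N^-(v)}f(u)=\{1,\dots,k\}$; its weight is $\omega(f)=\sum_v|f(v)|$. If $D$ has no isolated vertex, a total $k$RDF (T$k$RDF) is a $k$RDF $f$ such that the subdigraph induced by $\{v:f(v)\ne\emptyset\}$ has no isolated vertex; $\gamma_{trk}(D)$ is the minimum weight of a T$k$RDF. *)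

From mathcomp Require Import all_boot.
Set Implicit Arguments. Unset Strict Implicit. Unset Printing Implicit Defensive.

(* A digraph on a finite vertex type V is an arc relation e : rel V
   (e u v means there is an arc u -> v); no loops. Pairs of opposite arcs
   are allowed; multiple arcs cannot occur. *)
Definition digraph (V : finType) (e : rel V) : Prop := forall x, ~~ e x x.

Definition isolated (V : finType) (e : rel V) (v : V) : bool :=
  [forall u, ~~ e u v && ~~ e v u].

Definition no_isolated (V : finType) (e : rel V) : Prop :=
  forall v, ~~ isolated e v.

(* Colours {1,...,k} are represented by 'I_k. *)
Definition kRDF (V : finType) (e : rel V) (k : nat)
  (f : {ffun V -> {set 'I_k}}) : bool :=
  [forall v, (f v == set0) ==> (\bigcup_(u | e u v) f u == [set: 'I_k])].

Definition TkRDF (V : finType) (e : rel V) (k : nat)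
  (f : {ffun V -> {set 'I_k}}) : bool :=
  kRDF e f &&
  [forall v, (f v != set0) ==>
     [exists u, (f u != set0) && (e u v || e v u)]].

Definition weight (V : finType) (k : nat) (f : {ffun V -> {set 'I_k}}) : nat :=
  \sum_(v : V) #|f v|.

(* The default value #|V| * k is the
   weight of the constant function [set: 'I_k], which is a TkRDF whenever D has
   no isolated vertex, so it never changes the minimum in that case. *)
Definition gamma_tr (V : finType) (e : rel V) (k : nat) : nat :=
  \big[minn/(#|V| * k)%N]_(f : {ffun V -> {set 'I_k}} | TkRDF e f) weight f.

(* Take a TkRDF f of minimum weight. By averaging, some colour i0 is carried
   by at most gamma_trk/k vertices. Pulling f back along the map {1..k'} ->
   {1..k} that is the identity on {1..k} and sends every new colour to i0
   gives a Tk'RDF (the map is onto, so domination and totality survive), and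
   it costs exactly k' - k extra colours at each vertex carrying i0.
   Sharpness: take two stars K_{1,m}, m >= k', with adjacent centres. In any
   kRDF (k <= m) each star weighs at least k, since a centre lacking a colour
   forces each of its m leaves to be coloured; full centres cost exactly 2k.
   So gamma_trk = 2k and gamma_trk' = 2k', which is the bound with equality. *)
From mathcomp Require Import all_boot all_order zify.
Set Implicit Arguments. Unset Strict Implicit. Unset Printing Implicit Defensive.
Import Order.TTheory.

Section Weights.
Variables (V : finType) (e : rel V) (k : nat).
Implicit Type f : {ffun V -> {set 'I_k}}.

Lemma TkRDF_setT : no_isolated e -> 0 < k -> TkRDF e [ffun _ => [set: 'I_k]].
Proof.
move=> noiso k_gt0; have setT_neq0 : [set: 'I_k] != set0.
  by apply/set0Pn; exists (Ordinal k_gt0).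
apply/andP; split; apply/forallP=> v; rewrite ffunE; apply/implyP => //.
  by rewrite (negbTE setT_neq0).
move=> _; have := noiso v; rewrite /isolated negb_forall => /existsP [u].
by rewrite negb_and !negbK => euv; apply/existsP; exists u; rewrite ffunE setT_neq0.
Qed.

Lemma weight_setT : weight [ffun _ : V => [set: 'I_k]] = #|V| * k.
Proof.
rewrite /weight (eq_bigr (fun _ => k)) ?sum_nat_const // => v _.
by rewrite ffunE cardsT card_ord.
Qed.

Lemma weight_leq_card f : weight f <= #|V| * k.
Proof.
rewrite -weight_setT; apply: leq_sum => v _.
by rewrite ffunE cardsT max_card.
Qed.

Lemma gamma_tr_leq_weight f : TkRDF e f -> gamma_tr e k <= weight f.
Proof. by move=> Tf; rewrite /gamma_tr -minEnat -leEnat; apply: bigmin_le_cond. Qed.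

Lemma gamma_tr_attained : no_isolated e -> 0 < k ->
  exists2 f : {ffun V -> {set 'I_k}}, TkRDF e f & weight f = gamma_tr e k.
Proof.
move=> noiso k_gt0; rewrite /gamma_tr -minEnat.
have [f Tf ->] := eq_bigmin _ _ (@weight V k) (TkRDF_setT noiso k_gt0)
  (fun f _ => weight_leq_card f).
by exists f.
Qed.

Definition colour_count f (i : 'I_k) : nat := \sum_v (i \in f v).

Lemma sum_colour_count f : \sum_i colour_count f i = weight f.
Proof.
rewrite /colour_count exchange_big; apply: eq_bigr => v _.
by rewrite -sum1_card [RHS]big_mkcond; apply: eq_bigr => i _; case: (i \in f v).
Qed.

End Weights.

Lemma exists_leq_mean (I : finType) (i0 : I) (F : I -> nat) :
  exists i, #|I| * F i <= \sum_j F j.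
Proof.
case: (@arg_minnP _ i0 xpredT F isT) => i _ Fmin; exists i.
by rewrite -sum_nat_const; apply: leq_sum => j _; apply: Fmin.
Qed.

Section Pullback.
Variables (V : finType) (e : rel V) (k k' : nat).
Variables (phi : 'I_k' -> 'I_k) (psi : 'I_k -> 'I_k').
Hypothesis psiK : cancel psi phi.
Implicit Type f : {ffun V -> {set 'I_k}}.

Definition pullback f : {ffun V -> {set 'I_k'}} := [ffun v => phi @^-1: f v].

Lemma pullback_eq0 f v : (pullback f v == set0) = (f v == set0).
Proof.
rewrite ffunE; apply/idP/idP => /eqP fv0; apply/eqP; last by rewrite fv0 preimset0.
apply/setP => i; rewrite inE; apply/negP => fvi.
by have := in_set0 (psi i); rewrite -fv0 inE psiK fvi.
Qed.

Lemma TkRDF_pullback f : TkRDF e f -> TkRDF e (pullback f).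
Proof.
case/andP => /forallP dom /forallP tot; apply/andP; split; apply/forallP => v.
  rewrite pullback_eq0; apply/implyP => /(implyP (dom v)) /eqP cover.
  apply/eqP/setP => j; rewrite inE; apply/bigcupP.
  have /bigcupP [u euv fu] : phi j \in \bigcup_(u | e u v) f u by rewrite cover inE.
  by exists u; rewrite // ffunE inE.
rewrite pullback_eq0; apply/implyP => /(implyP (tot v)) /existsP [u /andP [fu euv]].
by apply/existsP; exists u; rewrite pullback_eq0 fu.
Qed.

End Pullback.

Section FoldColours.
Variables (k k' : nat) (i0 : 'I_k).
Hypothesis le_kk' : k <= k'.

Definition fold_colours (j : 'I_k') : 'I_k := odflt i0 (insub (val j)).

Lemma widen_ordK : cancel (widen_ord le_kk') fold_colours.
Proof. by move=> i; rewrite /fold_colours /= valK. Qed.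

Lemma card_fold_colours_preimset (A : {set 'I_k}) :
  #|fold_colours @^-1: A| = #|A| + (i0 \in A) * (k' - k).
Proof.
pose inA n := odflt i0 (insub n) \in A.
have -> : #|fold_colours @^-1: A| = \sum_(0 <= n < k') inA n.
  by rewrite big_mkord -sum1_card big_mkcond; apply: eq_bigr => j _; rewrite inE.
rewrite (@big_cat_nat _ _ _ k) //= mulnC -sum_nat_const_nat.
congr (_ + _).
  rewrite big_mkord -sum1_card [RHS]big_mkcond; apply: eq_bigr => i _.
  by rewrite /inA valK.
apply: eq_big_nat => n /andP [le_kn _].
by rewrite /inA insubN // -leqNgt.
Qed.

End FoldColours.

Section Extension.
Variables (V : finType) (e : rel V) (k k' : nat).
Hypotheses (k_gt0 : 0 < k) (le_kk' : k <= k').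
Implicit Type f : {ffun V -> {set 'I_k}}.

Lemma weight_pullback_fold f i0 :
  weight (pullback (@fold_colours _ k' i0) f) = weight f + (k' - k) * colour_count f i0.
Proof.
rewrite /weight /colour_count big_distrr -big_split /=; apply: eq_bigr => v _.
by rewrite ffunE card_fold_colours_preimset // mulnC.
Qed.

Lemma TkRDF_extend f : TkRDF e f ->
  exists2 g : {ffun V -> {set 'I_k'}},
    TkRDF e g & weight g <= weight f + (k' - k) * (weight f %/ k).
Proof.
move=> Tf; have [i0 rare] := exists_leq_mean (Ordinal k_gt0) (colour_count f).
exists (pullback (@fold_colours _ k' i0) f).
  exact: TkRDF_pullback (widen_ordK i0 le_kk') _ Tf.
rewrite weight_pullback_fold leq_add2l leq_mul2l; apply/orP; right.
by rewrite leq_divRL // mulnC -sum_colour_count -{1}(card_ord k).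
Qed.

Lemma gamma_tr_extend : no_isolated e ->
  gamma_tr e k' <= gamma_tr e k + (k' - k) * (gamma_tr e k %/ k).
Proof.
move=> noiso; have [f Tf <-] := gamma_tr_attained noiso k_gt0.
have [g Tg] := TkRDF_extend Tf.
exact/leq_trans/gamma_tr_leq_weight.
Qed.

End Extension.

Lemma kRDF_pendant (V : finType) (e : rel V) k (f : {ffun V -> {set 'I_k}}) c v :
  kRDF e f -> (forall u, e u v -> u = c) -> f v = set0 -> f c = setT.
Proof.
move=> /forallP /(_ v) /implyP dom in_v fv0.
apply/eqP; rewrite eqEsubset subsetT -(eqP (dom (introT eqP fv0))).
by apply/bigcupsP => u /in_v ->.
Qed.

(* Two stars K_{1,m} with centres (false, ord0) and (true, ord0), the centres
   joined to each other; every arc comes with its reverse. *)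
Definition double_star (m : nat) : rel (bool * 'I_m.+1) :=
  fun x y => if x.1 == y.1 then (x.2 == ord0) != (y.2 == ord0)
             else (x.2 == ord0) && (y.2 == ord0).
Arguments double_star : clear implicits.

Section DoubleStar.
Variables (m k : nat).
Implicit Type f : {ffun bool * 'I_m.+1 -> {set 'I_k}}.

Lemma lift0_eq0 (i : 'I_m) : (lift ord0 i == ord0) = false.
Proof. by rewrite eq_sym (negbTE (neq_lift _ _)). Qed.

Lemma double_star_digraph : digraph (double_star m).
Proof. by move=> x; rewrite /double_star !eqxx. Qed.

Lemma double_star_no_isolated : no_isolated (double_star m).
Proof.
move=> [s j]; rewrite /isolated negb_forall; apply/existsP.
exists (if j == ord0 then (~~ s, ord0) else (s, ord0)).
case: eqP => [->|/eqP j_neq0]; rewrite /double_star /= ?eqxx ?(negbTE j_neq0) //.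
by case: s.
Qed.

Lemma double_star_leaf s (i : 'I_m) u :
  double_star m u (s, lift ord0 i) -> u = (s, ord0).
Proof.
case: u => t j; rewrite /double_star /= lift0_eq0.
by rewrite andbF; case: (t =P s) => [->|//]; case: (j =P ord0) => [->|].
Qed.

Lemma weight_double_star f :
  weight f = \sum_s (#|f (s, ord0)| + \sum_(i < m) #|f (s, lift ord0 i)|).
Proof.
rewrite [RHS](eq_bigr (fun s => \sum_j #|f (s, j)|)) => [|s _];
  last by rewrite big_ord_recl.
by rewrite pair_big; apply: eq_bigr => -[].
Qed.

Lemma double_star_side_ge f s : kRDF (double_star m) f -> k <= m ->
  k <= #|f (s, ord0)| + \sum_(i < m) #|f (s, lift ord0 i)|.
Proof.
move=> Df le_km; have [centre_full|centre_notfull] := eqVneq (f (s, ord0)) setT.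
  by rewrite centre_full cardsT card_ord leq_addr.
apply: leq_trans le_km (leq_trans _ (leq_addl _ _)).
rewrite -{1}(card_ord m) -sum1_card; apply: leq_sum => i _.
rewrite card_gt0; apply: contra centre_notfull => /eqP leaf0.
exact/eqP/(kRDF_pendant Df (@double_star_leaf s i) leaf0).
Qed.

Definition full_centres : {ffun bool * 'I_m.+1 -> {set 'I_k}} :=
  [ffun x => if x.2 == ord0 then setT else set0].

Lemma TkRDF_full_centres : 0 < k -> TkRDF (double_star m) full_centres.
Proof.
move=> k_gt0; have setT_neq0 : [set: 'I_k] != set0.
  by apply/set0Pn; exists (Ordinal k_gt0).
apply/andP; split; apply/forallP => -[s j]; rewrite ffunE /=.
  case: (j =P ord0) => [_|/eqP j_neq0]; first by rewrite (negbTE setT_neq0).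
  apply/implyP => _; apply/eqP/setP => c; rewrite inE; apply/bigcupP.
  by exists (s, ord0); rewrite /double_star ?ffunE /= ?eqxx ?(negbTE j_neq0) ?inE.
case: (j =P ord0) => [->|]; last by rewrite eqxx.
apply/implyP => _; apply/existsP; exists (~~ s, ord0).
by rewrite ffunE /= setT_neq0 /double_star /=; case: s.
Qed.

Lemma weight_full_centres : weight full_centres = k.*2.
Proof.
rewrite weight_double_star big_bool !ffunE /= cardsT card_ord.
by rewrite !big1 ?addn0 ?addnn // => i _; rewrite ffunE lift0_eq0 cards0.
Qed.

Lemma gamma_tr_double_star : 0 < k -> k <= m -> gamma_tr (double_star m) k = k.*2.
Proof.
move=> k_gt0 le_km; apply/eqP; rewrite eqn_leq.
rewrite -{1}weight_full_centres gamma_tr_leq_weight ?TkRDF_full_centres //=.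
have [f /andP [Df _] <-] := gamma_tr_attained double_star_no_isolated k_gt0.
rewrite weight_double_star big_bool -addnn.
by apply: leq_add; apply: double_star_side_ge.
Qed.

End DoubleStar.

Theorem theorem3p7 :
  (forall (V : finType) (e : rel V) (k k' : nat),
      digraph e -> no_isolated e -> 0 < k -> k < k' ->
      gamma_tr e k' <= gamma_tr e k + (k' - k) * (gamma_tr e k %/ k))
  /\
  (forall k k' : nat, 0 < k -> k < k' ->
      exists (V : finType) (e : rel V),
        [/\ digraph e, no_isolated e &
            gamma_tr e k' = gamma_tr e k + (k' - k) * (gamma_tr e k %/ k)]).
Proof.
split=> [V e k k' _ noiso k_gt0 lt_kk' | k k' k_gt0 lt_kk'].
  exact: gamma_tr_extend k_gt0 (ltnW lt_kk') noiso.
have le_kk' := ltnW lt_kk'.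
exists ((bool * 'I_k'.+1)%type : finType), (double_star k').
split; [exact: double_star_digraph | exact: double_star_no_isolated |].
rewrite !gamma_tr_double_star ?(leq_trans k_gt0) // -!muln2 mulKn //; lia.
Qed.
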